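(* Let $n \geq 4$ and let $S$ be a $4$-cap free, $n$-cup free configuration. Suppose $S$ contains an $(n-1)$-cup $C$ from $x$ to $y$, an $(n-2)$-cup $C_x$ that ends with $x$, and an $(n-2)$-cup $C_y$ that starts with $y$. Then $S$ contains a pair of interweaved laced $(n-1)$-cups.
   Context: A configuration is a finite set $S$ of points with a linear order $<$ and, for every $3$-element subset, an arbitrary assignment declaring it either a cap or a cup. Points $x_1<\cdots<x_a$ form an $a$-cup (resp. $a$-cap) if every consecutive triple $\{x_{i-1},x_i,x_{i+1}\}$, $1<i<a$, is assigned cup (resp. cap); $1$- and $2$-element sets are both caps and cups. The size of a cup is its number of points; a cup $x_1\cdots x_a$ runs from (starts with) $x_1$ to (ends with) $x_a$. Two cups $C_1$, $C_2$ running from $p$ to $r$ and from $q$ to $s$ respectively are interweaved if $p<q\le r<s$. An $(n-1)$-cup $C$ from $p$ to $q$ is laced if there exist a cup $C_p$ ending with $p$ and a cup $C_q$ starting with $q$ such that $|C_p|+|C_q|=n-1$. *)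

From mathcomp Require Import all_boot.
Set Implicit Arguments. Unset Strict Implicit. Unset Printing Implicit Defensive.

(* A configuration: points 'I_N linearly ordered by <, and
   cupf x y z (for x < y < z) says whether the triple {x,y,z} is a cup
   (true) or a cap (false).  Values on non-increasing triples are irrelevant. *)
Section Config.
Variables (N : nat) (cupf : 'I_N -> 'I_N -> 'I_N -> bool).

Fixpoint triples_ok (P : 'I_N -> 'I_N -> 'I_N -> bool) (s : seq 'I_N) : bool :=
  match s with
  | x :: ((y :: z :: _) as t) => P x y z && triples_ok P t
  | _ => true
  end.

Definition is_cup (s : seq 'I_N) : bool :=
  sorted (fun a b : 'I_N => a < b) s && triples_ok cupf s.

Definition is_cap (s : seq 'I_N) : bool :=
  sorted (fun a b : 'I_N => a < b) s
  && triples_ok (fun x y z => ~~ cupf x y z) s.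

Definition cap_free (a : nat) : Prop := forall s, is_cap s -> size s <> a.
Definition cup_free (a : nat) : Prop := forall s, is_cup s -> size s <> a.

Definition runs (s : seq 'I_N) (p q : 'I_N) : Prop :=
  exists t, s = p :: t /\ last p t = q.

Definition ends_with (s : seq 'I_N) (p : 'I_N) : Prop := exists t, s = rcons t p.
Definition starts_with (s : seq 'I_N) (p : 'I_N) : Prop := exists t, s = p :: t.

Definition laced (n : nat) (C : seq 'I_N) : Prop :=
  is_cup C /\ size C = n.-1 /\
  exists p q, runs C p q /\
    exists Cp Cq, [/\ is_cup Cp, is_cup Cq, ends_with Cp p, starts_with Cq q
                    & size Cp + size Cq = n.-1].

End Config.

From mathcomp Require Import all_boot zify.
Set Implicit Arguments. Unset Strict Implicit. Unset Printing Implicit Defensive.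

(* Write C = x c2 c3 ... c'' c' y, Cx = ... a x and Cy = y b ....  Since there
   is no n-cup, neither a x c2 nor c' y b is a cup.  Two overlapping caps
   u v w and v w z would form a 4-cap; this forces x c2 y and x c' y, and then
   a c2 y and x c' b, to be cups (otherwise x c2 Cy, resp. Cx c' y, would be an
   n-cup).  Hence a c2 c3 ... y (if a c2 c3 is a cup) or Cx without x followed
   by c2 y (if it is a cap) is a laced (n-1)-cup from before x to y, laced
   through Cy; symmetrically x ... c'' c' b or x c' followed by Cy without y is
   a laced (n-1)-cup from x to after y, laced through Cx. *)

Lemma head_rcons (T : Type) (x0 : T) s a : head x0 (rcons s a) = head a s.
Proof. by case: s. Qed.

Section Cups.
Variables (N : nat) (cupf : 'I_N -> 'I_N -> 'I_N -> bool).
Local Notation is_cup := (is_cup cupf).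
Implicit Types (P : 'I_N -> 'I_N -> 'I_N -> bool) (s : seq 'I_N) (a b c d : 'I_N).

Lemma triples_ok_cons3 P u v w s :
  triples_ok P [:: u, v, w & s] = P u v w && triples_ok P [:: v, w & s].
Proof. by []. Qed.

Lemma triples_ok_rcons3 P s a b c :
  triples_ok P (rcons (rcons (rcons s a) b) c) =
  triples_ok P (rcons (rcons s a) b) && P a b c.
Proof.
elim: s => [|u s IH]; first by rewrite /= andbT.
case: s IH => [|v [|w s]] IH; first by rewrite /= !andbT.
  by rewrite /= !andbT andbA.
rewrite !rcons_cons in IH *.
by rewrite triples_ok_cons3 [in RHS]triples_ok_cons3 IH andbA.
Qed.

Lemma is_cup_cons3 a b c s :
  is_cup [:: a, b, c & s] = [&& a < b, cupf a b c & is_cup [:: b, c & s]].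
Proof.
by rewrite /is_cup /=; case: (a < b); case: (cupf a b c); rewrite /= ?andbF.
Qed.

Lemma sorted_rcons2 (e : rel 'I_N) s a b :
  sorted e (rcons (rcons s a) b) = sorted e (rcons s a) && e a b.
Proof. by case: s => [|u s] /=; rewrite ?rcons_path ?last_rcons ?andbT. Qed.

Lemma is_cup_rcons3 s a b c :
  is_cup (rcons (rcons (rcons s a) b) c) =
  [&& b < c, cupf a b c & is_cup (rcons (rcons s a) b)].
Proof.
rewrite /is_cup sorted_rcons2 triples_ok_rcons3.
by case: (b < c); case: (cupf a b c); rewrite ?andbT ?andbF.
Qed.

Lemma cup_behead a s : is_cup (a :: s) -> is_cup s.
Proof. by case: s => [|b [|c s]] //; rewrite is_cup_cons3 => /and3P[]. Qed.

Lemma cup_belast s a : is_cup (rcons s a) -> is_cup s.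
Proof.
case/lastP: s => [|s b] //; case/lastP: s => [|s c] //.
by rewrite is_cup_rcons3 => /and3P[].
Qed.

Lemma cup_lt_cat s1 s2 a b : is_cup (s1 ++ s2) -> a \in s1 -> b \in s2 -> a < b.
Proof.
have lt_trans : transitive (fun a b : 'I_N => a < b) by move=> ? ? ?; apply: ltn_trans.
case/andP; rewrite sorted_pairwise // pairwise_cat => /and3P[/allrelP lt12 _ _] _.
exact: lt12.
Qed.

Lemma cup_lt_cons a s b : is_cup (a :: s) -> b \in s -> a < b.
Proof. by move/(@cup_lt_cat [:: a]); apply; rewrite mem_head. Qed.

Lemma cup_lt_rcons s a b : is_cup (rcons s b) -> a \in s -> a < b.
Proof. by rewrite -cats1 => /cup_lt_cat lt_sb /lt_sb; apply; rewrite mem_head. Qed.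

Lemma cup_runs_lt s p q : is_cup s -> runs s p q -> 1 < size s -> p < q.
Proof.
move=> cup_s [[|u t] [Es <-]]; rewrite {}Es in cup_s * => //= _.
by rewrite (cup_lt_cons cup_s) ?mem_last.
Qed.

Lemma cup_free_cons_cap n a b c s :
  cup_free cupf n -> a < b -> is_cup [:: b, c & s] -> (size s).+3 = n -> ~~ cupf a b c.
Proof.
move=> no_cupn ab cup_bcs sz; apply/negP => abc.
by apply: (no_cupn [:: a, b, c & s] _ sz); rewrite is_cup_cons3 ab abc.
Qed.

Lemma cup_free_rcons_cap n s a b c :
  cup_free cupf n -> b < c -> is_cup (rcons (rcons s a) b) -> (size s).+3 = n ->
  ~~ cupf a b c.
Proof.
move=> no_cupn bc cup_sab sz; apply/negP => abc.
apply: (no_cupn (rcons (rcons (rcons s a) b) c) _); last by rewrite !size_rcons.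
by rewrite is_cup_rcons3 bc abc.
Qed.

Section CapFree4.
Hypothesis no_cap4 : cap_free cupf 4.

Lemma no_adjacent_caps a b c d :
  a < b -> b < c -> c < d -> cupf a b c || cupf b c d.
Proof.
move=> ab bc cd; rewrite -[_ || _]negbK negb_or; apply/negP => /andP[nabc nbcd].
have cap_abcd : is_cap cupf [:: a; b; c; d] by rewrite /is_cap /= ab bc cd nabc nbcd.
exact: no_cap4 cap_abcd erefl.
Qed.

Lemma cup_cons_after_cap a b c s :
  a < b -> ~~ cupf a b c -> b < c -> is_cup (c :: s) -> is_cup [:: b, c & s].
Proof.
move=> ab nabc bc; case: s => [|d s]; first by rewrite /is_cup /= bc.
move=> cup_cds; rewrite is_cup_cons3 bc cup_cds andbT.
have cd : c < d by rewrite (cup_lt_cons cup_cds) ?mem_head.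
by have := no_adjacent_caps ab bc cd; rewrite (negbTE nabc).
Qed.

Lemma cup_rcons_before_cap s b c d :
  ~~ cupf b c d -> b < c -> c < d -> is_cup (rcons s b) -> is_cup (rcons (rcons s b) c).
Proof.
move=> nbcd bc cd; case/lastP: s => [|s a]; first by rewrite /is_cup /= bc.
move=> cup_sab; rewrite is_cup_rcons3 bc cup_sab andbT.
have ab : a < b by rewrite (cup_lt_rcons cup_sab) ?mem_rcons ?mem_head.
by have := no_adjacent_caps ab bc cd; rewrite (negbTE nbcd) orbF.
Qed.

End CapFree4.

Lemma runs_rcons s q : runs (rcons s q) (head q s) q.
Proof. by case: s => [|p s]; [exists [::] | exists (rcons s q); rewrite last_rcons]. Qed.

Lemma runs_rconsP s p q : runs s p q -> exists t, s = rcons t q /\ head q t = p.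
Proof. by case=> t [-> <-]; exists (belast p t); rewrite -lastI; case: t. Qed.

Lemma laced_of_next_cup n C p q Cq :
  is_cup C -> size C = n.-1 -> runs C p q ->
  is_cup Cq -> starts_with Cq q -> (size Cq).+1 = n.-1 -> laced cupf n C.
Proof.
move=> cupC sizeC runsC cupCq Cq_q sizeCq; do 2!split=> //.
by exists p, q; split=> //; exists [:: p], Cq; split=> //; exists [::].
Qed.

Lemma laced_of_prev_cup n C p q Cp :
  is_cup C -> size C = n.-1 -> runs C p q ->
  is_cup Cp -> ends_with Cp p -> (size Cp).+1 = n.-1 -> laced cupf n C.
Proof.
move=> cupC sizeC runsC cupCp Cp_p sizeCp; do 2!split=> //.
by exists p, q; split=> //; exists Cp, [:: q]; split=> //; [exists [::] | rewrite addn1].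
Qed.

End Cups.

Section LacedCups.
Variables (N : nat) (cupf : 'I_N -> 'I_N -> 'I_N -> bool) (n : nat).
Local Notation is_cup := (is_cup cupf).
Hypotheses (n_ge4 : 4 <= n) (no_cap4 : cap_free cupf 4) (no_cupn : cup_free cupf n).
Variables (C Cx Cy : seq 'I_N) (x y : 'I_N).
Hypotheses (cupC : is_cup C) (sizeC : size C = n.-1) (runsC : runs C x y).
Hypotheses (cupCx : is_cup Cx) (sizeCx : size Cx = n.-2) (Cx_x : ends_with Cx x).
Hypotheses (cupCy : is_cup Cy) (sizeCy : size Cy = n.-2) (Cy_y : starts_with Cy y).

Lemma laced_cup_to_end : exists C1 p, [/\ laced cupf n C1, runs C1 p y & p < x].
Proof.
case: runsC cupC sizeC => [[|c2 [|c3 R]] [-> /= Ry]] //= cupC' sizeC'; try lia.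
case: Cx_x cupCx sizeCx => [+ ->]; case/lastP => [|Ax a]; rewrite ?size_rcons //=; try lia.
move=> cupCx' sizeCx'.
case: Cy_y cupCy sizeCy => [[|b By] ->] //=; try lia.
move=> cupCy' sizeCy'.
have nE : n = (size R).+4 by lia.
have sizeAx : size Ax = size R by lia.
have sizeBy : size By = size R by lia.
subst n.
have ax : a < x by rewrite (cup_lt_rcons cupCx') ?mem_rcons ?mem_head.
have := cupC'; rewrite is_cup_cons3 => /and3P[xc2 _ cupC2].
have c2c3 : c2 < c3 by rewrite (cup_lt_cons cupC2) ?mem_head.
have c2y : c2 < y by rewrite -Ry (cup_lt_cons cupC2) ?mem_last.
have yb : y < b by rewrite (cup_lt_cons cupCy') ?mem_head.
have nax2 : ~~ cupf a x c2 := cup_free_cons_cap no_cupn ax cupC' erefl.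
have ac2y : cupf a c2 y.
  have xc2y : cupf x c2 y.
    by have := no_adjacent_caps no_cap4 ax xc2 c2y; rewrite (negbTE nax2).
  apply/contraT => nac2y.
  have c2yb : cupf c2 y b.
    have := no_adjacent_caps no_cap4 (ltn_trans ax xc2) c2y yb.
    by rewrite (negbTE nac2y).
  have cup_xc2Cy : is_cup [:: x, c2, y, b & By].
    by rewrite !is_cup_cons3 xc2 xc2y c2y c2yb.
  by have := no_cupn cup_xc2Cy; rewrite /= sizeBy.
case ac2c3 : (cupf a c2 c3).
  have runs1 : runs [:: a, c2, c3 & R] a y by exists [:: c2, c3 & R].
  exists [:: a, c2, c3 & R], a; split=> //.
  apply: (@laced_of_next_cup _ _ _ _ a y [:: y, b & By]) => //=; rewrite ?sizeBy //.
  - by rewrite is_cup_cons3 (ltn_trans ax xc2) ac2c3.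
  - by exists (b :: By).
have runs1 : runs (rcons (rcons (rcons Ax a) c2) y) (head a Ax) y.
  by have := runs_rcons (rcons (rcons Ax a) c2) y; rewrite !head_rcons.
exists (rcons (rcons (rcons Ax a) c2) y), (head a Ax); split=> //.
- apply: (@laced_of_next_cup _ _ _ _ (head a Ax) y [:: y, b & By]) => //=;
    rewrite ?size_rcons ?sizeAx ?sizeBy //.
  + rewrite is_cup_rcons3 c2y ac2y.
    apply: (cup_rcons_before_cap no_cap4 (negbT ac2c3) (ltn_trans ax xc2) c2c3).
    exact: cup_belast cupCx'.
  + by exists (b :: By).
- by rewrite (cup_lt_rcons cupCx') // [rcons Ax a]headI mem_head.
Qed.

Lemma laced_cup_from_start : exists C2 s, [/\ laced cupf n C2, runs C2 x s & y < s].
Proof.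
have [t [ECt]] := runs_rconsP runsC; move: cupC sizeC; rewrite {}ECt.
case/lastP: t => [|t c']; rewrite ?size_rcons //=; try lia.
case/lastP: t => [|D c'']; rewrite ?size_rcons ?head_rcons //=; try lia.
move=> cupC' sizeC' Dx.
case: Cx_x cupCx sizeCx => [+ ->]; case/lastP => [|Ax a]; rewrite ?size_rcons //=; try lia.
move=> cupCx' sizeCx'.
case: Cy_y cupCy sizeCy => [[|b By] ->] //=; try lia.
move=> cupCy' sizeCy'.
have nE : n = (size D).+4 by lia.
have sizeAx : size Ax = size D by lia.
have sizeBy : size By = size D by lia.
subst n.
have := cupC'; rewrite is_cup_rcons3 => /and3P[c'y _ cupC1].
have c''c' : c'' < c' by rewrite (cup_lt_rcons cupC1) ?mem_rcons ?mem_head.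
have xc' : x < c' by rewrite (cup_lt_rcons cupC1) // -Dx [rcons D c'']headI mem_head.
have ax : a < x by rewrite (cup_lt_rcons cupCx') ?mem_rcons ?mem_head.
have yb : y < b by rewrite (cup_lt_cons cupCy') ?mem_head.
have ylast : y < last b By by rewrite (cup_lt_cons cupCy') ?mem_last.
have nc'yb : ~~ cupf c' y b.
  by apply: (cup_free_rcons_cap no_cupn yb cupC'); rewrite size_rcons.
have xc'b : cupf x c' b.
  have xc'y : cupf x c' y.
    by have := no_adjacent_caps no_cap4 xc' c'y yb; rewrite (negbTE nc'yb) orbF.
  apply/contraT => nxc'b.
  have axc' : cupf a x c'.
    have := no_adjacent_caps no_cap4 ax xc' (ltn_trans c'y yb).
    by rewrite (negbTE nxc'b) orbF.
  have cup_Cxc'y : is_cup (rcons (rcons (rcons (rcons Ax a) x) c') y).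
    by rewrite !is_cup_rcons3 c'y xc'y xc' axc'.
  by have := no_cupn cup_Cxc'y; rewrite !size_rcons sizeAx.
case c''c'b : (cupf c'' c' b).
  have runs2 : runs (rcons (rcons (rcons D c'') c') b) x b.
    by have := runs_rcons (rcons (rcons D c'') c') b; rewrite !head_rcons Dx.
  exists (rcons (rcons (rcons D c'') c') b), b; split=> //.
  apply: (@laced_of_prev_cup _ _ _ _ x b (rcons (rcons Ax a) x)) => //;
    rewrite ?size_rcons ?sizeAx //.
  - by rewrite is_cup_rcons3 (ltn_trans c'y yb) c''c'b.
  - by exists (rcons Ax a).
have runs2 : runs [:: x, c', b & By] x (last b By) by exists [:: c', b & By].
exists [:: x, c', b & By], (last b By); split=> //.
apply: (@laced_of_prev_cup _ _ _ _ x (last b By) (rcons (rcons Ax a) x)) => //=;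
  rewrite ?size_rcons ?sizeAx ?sizeBy //.
- rewrite is_cup_cons3 xc' xc'b.
  apply: (cup_cons_after_cap no_cap4 c''c' (negbT c''c'b) (ltn_trans c'y yb)).
  exact: cup_behead cupCy'.
- by exists (rcons Ax a).
Qed.

End LacedCups.

Theorem lemma5p3 (N : nat) (cupf : 'I_N -> 'I_N -> 'I_N -> bool) (n : nat) :
  4 <= n ->
  cap_free cupf 4 -> cup_free cupf n ->
  forall (C Cx Cy : seq 'I_N) (x y : 'I_N),
    is_cup cupf C -> size C = n.-1 -> runs C x y ->
    is_cup cupf Cx -> size Cx = n.-2 -> ends_with Cx x ->
    is_cup cupf Cy -> size Cy = n.-2 -> starts_with Cy y ->
  exists (C1 C2 : seq 'I_N) (p q r s : 'I_N),
    [/\ laced cupf n C1, laced cupf n C2, runs C1 p r, runs C2 q s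
      & (p < q)%N && (q <= r)%N && (r < s)%N].
Proof.
move=> n_ge4 no_cap4 no_cupn C Cx Cy x y
  cupC sizeC runsC cupCx sizeCx Cx_x cupCy sizeCy Cy_y.
have [C1 [p [laced1 runs1 px]]] := laced_cup_to_end n_ge4 no_cap4 no_cupn
  cupC sizeC runsC cupCx sizeCx Cx_x cupCy sizeCy Cy_y.
have [C2 [s [laced2 runs2 ys]]] := laced_cup_from_start n_ge4 no_cap4 no_cupn
  cupC sizeC runsC cupCx sizeCx Cx_x cupCy sizeCy Cy_y.
have xy : x < y by apply: cup_runs_lt cupC runsC _; rewrite sizeC; lia.
exists C1, C2, p, x, y, s; split=> //.
by rewrite px ys ltnW.
Qed.
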